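(* The function $h$ is well defined (distinct sequences $(\alpha_n)$ with $\alpha_n\in\Theta$ give distinct points of $D(h)$, each point of $D(h)$ having a unique nega-$q$-ary representation), $h$ is a bijection from $D(h)$ onto $E(h)=\{\Delta^{-q}_{\alpha_1\alpha_2\ldots}:\alpha_n\in\Theta\}$, and $h$ is continuous at every point of $D(h)$.
   Context: Let $q>3$ be an integer, fix $u\in\{0,1,\ldots,q-1\}$, and put $\Theta=\{1,2,\ldots,q-1\}\setminus\{u\}$. The nega-$q$-ary representation is $\Delta^{-q}_{\beta_1\beta_2\ldots}=\sum_{k\ge1}\frac{\beta_k}{(-q)^k}$, $\beta_k\in\{0,\ldots,q-1\}$. For a sequence $(\alpha_n)_{n\ge1}$ with $\alpha_n\in\Theta$, let $x((\alpha_n))$ be the number whose nega-$q$-ary digit string is the concatenation of the blocks $\underbrace{u\ldots u}_{\alpha_n-1}\alpha_n$ ($\alpha_n-1$ copies of $u$ followed by the digit $\alpha_n$), $n=1,2,\ldots$; equivalently $x=-\frac{u}{q+1}+\sum_{n\ge1}\frac{\alpha_n-u}{(-q)^{\alpha_1+\cdots+\alpha_n}}$. Let $D(h)$ be the set of all such $x$, and define $h:D(h)\to\mathbb R$ by $h(x)=\Delta^{-q}_{\alpha_1\alpha_2\ldots}=\sum_{n\ge1}\frac{\alpha_n}{(-q)^n}$. *)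

From Stdlib Require Import Reals Lra Lia List Classical ClassicalEpsilon.
Open Scope R_scope.

(* Digit sequences are indexed from 0: beta k is the (k+1)-st digit beta_{k+1}. *)

Definition negaq_value (q : nat) (beta : nat -> nat) (x : R) : Prop :=
  infinite_sum (fun k => INR (beta k) / (- INR q) ^ (S k)) x.

Definition is_digit_seq (q : nat) (beta : nat -> nat) : Prop :=
  forall k, (beta k < q)%nat.

Definition in_Theta (q u : nat) (alpha : nat -> nat) : Prop :=
  forall n, (1 <= alpha n)%nat /\ (alpha n <= q - 1)%nat /\ alpha n <> u.

Fixpoint psum (alpha : nat -> nat) (n : nat) : nat :=
  match n with
  | O => O
  | S m => (psum alpha m + alpha m)%nat
  end.

(* The digit string obtained by concatenating the blocks
   u...u (alpha_n - 1 copies) followed by alpha_n, n = 1,2,...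
   Position k (0-based) is the last position of block n (0-based)
   iff psum alpha (n+1) = k+1; the digit there is alpha n, all other
   digits are u.  Since alpha n >= 1, such an n satisfies n <= k. *)
Definition block_digits (u : nat) (alpha : nat -> nat) (k : nat) : nat :=
  match find (fun n => Nat.eqb (psum alpha (S n)) (S k)) (seq 0 (S k)) with
  | Some n => alpha n
  | None => u
  end.

Definition Dh (q u : nat) (x : R) : Prop :=
  exists alpha, in_Theta q u alpha /\ negaq_value q (block_digits u alpha) x.

Definition Eh (q u : nat) (y : R) : Prop :=
  exists alpha, in_Theta q u alpha /\ negaq_value q alpha y.

(* h(x) = Delta^{-q}_{alpha_1 alpha_2 ...} where x = x((alpha_n)).
   (Chosen via classical epsilon; well-definedness is part of the theorem.)
   Outside D(h) the value is irrelevant. *)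
Definition h (q u : nat) (x : R) : R :=
  epsilon (inhabits 0) (fun y => exists alpha, in_Theta q u alpha /\
            negaq_value q (block_digits u alpha) x /\ negaq_value q alpha y).

(* Tails of nega-q-ary expansions lie in [[-q/(q+1), 1/(q+1)]], the bounds being
   attained only by the periodic words [(q-1) 0 (q-1) 0 ...] and [0 (q-1) 0 (q-1) ...].
   Neither the block digit strings of points of D(h) nor digit strings over Theta
   contain four consecutive digits of these patterns, so their tails stay [q^-4]
   away from the bounds, and two such expansions first differing at place [k] are at
   distance at least [q^-(k+5)].  This gives uniqueness of the representations and
   injectivity of [(alpha_n) |-> x]; it also shows that nearby points of D(h) share
   long digit prefixes, hence long block prefixes, hence nearby images under h. *)

From Stdlib Require Import Reals Lra Lia List ClassicalEpsilon FunctionalExtensionality.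
Open Scope R_scope.

Lemma Un_cv_const (c : R) : Un_cv (fun _ => c) c.
Proof. intros eps He; exists 0%nat; intros n _; rewrite R_dist_eq; lra. Qed.

Lemma Un_cv_le_eventually (a : nat -> R) (l c : R) (N : nat) :
  Un_cv a l -> (forall n, (N <= n)%nat -> a n <= c) -> l <= c.
Proof.
  intros Hu Hle.
  apply (@Rle_cv_lim (fun n => a (n + N)%nat) (fun _ => c) l c); [intros n; apply Hle; lia| |].
  - exact (CV_shift' a N l Hu).
  - apply Un_cv_const.
Qed.

Lemma Un_cv_ge_eventually (a : nat -> R) (l c : R) (N : nat) :
  Un_cv a l -> (forall n, (N <= n)%nat -> c <= a n) -> c <= l.
Proof.
  intros Hu Hge.
  apply (@Rle_cv_lim (fun _ => c) (fun n => a (n + N)%nat) c l); [intros n; apply Hge; lia| |].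
  - apply Un_cv_const.
  - exact (CV_shift' a N l Hu).
Qed.

Lemma Un_cv_dist (a b : nat -> R) (x y : R) :
  Un_cv a x -> Un_cv b y -> Un_cv (fun n => Rabs (a n - b n)) (Rabs (x - y)).
Proof. intros Ha Hb; apply cv_cvabs, CV_minus; assumption. Qed.

Lemma inv_pow_small (Q eps : R) : 1 < Q -> 0 < eps -> exists N, / Q ^ N < eps.
Proof.
  intros HQ He.
  destruct (pow_lt_1_zero (/ Q)) with (y := eps) as [N HN]; [|exact He|].
  - rewrite Rabs_pos_eq; [|left; apply Rinv_0_lt_compat; lra].
    rewrite <- Rinv_1; apply Rinv_1_lt_contravar; lra.
  - exists N; specialize (HN N (le_n N)).
    rewrite pow_inv, Rabs_pos_eq in HN; [exact HN | left; apply Rinv_0_lt_compat, pow_lt; lra].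
Qed.

Lemma Rabs_div_opp_pow (a Q : R) (n : nat) : 0 < Q -> Rabs (a / (- Q) ^ n) = Rabs a / Q ^ n.
Proof.
  intros HQ. unfold Rdiv.
  rewrite Rabs_mult, Rabs_inv, <- RPow_abs, Rabs_Ropp, (Rabs_pos_eq Q) by lra.
  reflexivity.
Qed.

(* [nega_word Q s b n] is the value [sum_(i<n) s (b+i) / (-Q)^(i+1)] of the word
   [s b ... s (b+n-1)], computed by Horner's scheme. *)
Fixpoint nega_word (Q : R) (s : nat -> nat) (b n : nat) : R :=
  match n with
  | O => 0
  | S n' => - (INR (s b) + nega_word Q s (S b) n') / Q
  end.

Lemma nega_word_add (Q : R) (s : nat -> nat) (b m n : nat) : Q <> 0 ->
  nega_word Q s b (m + n) = nega_word Q s b m + nega_word Q s (b + m) n / (- Q) ^ m.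
Proof.
  intros HQ; revert b; induction m as [|m IH]; intros b; simpl.
  - rewrite Nat.add_0_r. field.
  - rewrite IH, <- plus_n_Sm; change (S b + m)%nat with (S (b + m)).
    assert ((- Q) ^ m <> 0) by (apply pow_nonzero; lra).
    field; split; assumption.
Qed.

Lemma nega_word_ext (Q : R) (s t : nat -> nat) (b n : nat) :
  (forall k, (b <= k < b + n)%nat -> s k = t k) -> nega_word Q s b n = nega_word Q t b n.
Proof.
  revert b; induction n as [|n IH]; intros b Hst; simpl; [reflexivity|].
  rewrite (Hst b), (IH (S b)); [reflexivity | intros k Hk; apply Hst; lia | lia].
Qed.

Lemma sum_nega_word (Q : R) (s : nat -> nat) (n : nat) : Q <> 0 ->
  sum_f_R0 (fun k => INR (s k) / (- Q) ^ S k) n = nega_word Q s 0 (S n).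
Proof.
  intros HQ; induction n as [|n IH].
  - simpl; field; exact HQ.
  - rewrite tech5, IH.
    replace (nega_word Q s 0 (S (S n))) with (nega_word Q s 0 (S n + 1)) by (f_equal; lia).
    rewrite (nega_word_add Q s 0 (S n) 1 HQ); simpl.
    assert ((- Q) ^ n <> 0) by (apply pow_nonzero; lra).
    field; split; assumption.
Qed.

Lemma negaq_value_cv (q : nat) (s : nat -> nat) (x : R) : (0 < q)%nat ->
  negaq_value q s x -> Un_cv (nega_word (INR q) s 0) x.
Proof.
  intros Hq Hx. apply (CV_shift _ 1).
  intros eps He; destruct (Hx eps He) as [N HN]; exists N; intros n Hn.
  rewrite Nat.add_1_r, <- sum_nega_word by (apply not_0_INR; lia).
  exact (HN n Hn).
Qed.

Lemma INR_digit_bounds (q d : nat) : (d < q)%nat -> 0 <= INR d <= INR q - 1.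
Proof.
  intros Hd; split; [apply pos_INR|].
  apply le_INR in Hd; rewrite S_INR in Hd; lra.
Qed.

Lemma nega_word_bounds (q : nat) (s : nat -> nat) (b n : nat) : (0 < q)%nat ->
  is_digit_seq q s ->
  - INR q / (INR q + 1) <= nega_word (INR q) s b n <= 1 / (INR q + 1).
Proof.
  intros Hq Hs; revert b.
  assert (HQ : 1 <= INR q) by (apply (le_INR 1); lia).
  induction n as [|n IH]; intros b; simpl nega_word.
  - split; apply Rmult_le_reg_r with (INR q + 1); try lra; field_simplify; lra.
  - destruct (IH (S b)) as [Hlo Hhi].
    destruct (INR_digit_bounds q (s b) (Hs b)) as [Dlo Dhi].
    apply Rmult_le_compat_l with (r := INR q + 1) in Hlo, Hhi; try lra.
    replace ((INR q + 1) * (- INR q / (INR q + 1))) with (- INR q) in Hlo by (field; lra).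
    replace ((INR q + 1) * (1 / (INR q + 1))) with 1 in Hhi by (field; lra).
    split; apply Rmult_le_reg_r with (INR q * (INR q + 1)); try nra;
      field_simplify; try lra; nra.
Qed.

Lemma nega_word_dist_le_1 (q : nat) (s t : nat -> nat) (b c m n : nat) : (0 < q)%nat ->
  is_digit_seq q s -> is_digit_seq q t ->
  Rabs (nega_word (INR q) s b m - nega_word (INR q) t c n) <= 1.
Proof.
  intros Hq Hs Ht.
  destruct (nega_word_bounds q s b m Hq Hs), (nega_word_bounds q t c n Hq Ht).
  assert (1 / (INR q + 1) - - INR q / (INR q + 1) = 1)
    by (field; pose proof (pos_INR q); lra).
  apply Rabs_le; lra.
Qed.

(* The bounds of [nega_word_bounds] are the values of the periodic words
   [0 (q-1) 0 (q-1) ...] (upper) and [(q-1) 0 (q-1) 0 ...] (lower); a word whose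
   first four digits differ from these patterns stays [/ q^4] away from them. *)
Definition extremal_window (q : nat) (t : nat -> nat) (b : nat) : Prop :=
  (t b = 0 /\ t (S b) = q - 1 /\ t (S (S b)) = 0 /\ t (S (S (S b))) = q - 1)%nat \/
  (t b = q - 1 /\ t (S b) = 0 /\ t (S (S b)) = q - 1 /\ t (S (S (S b))) = 0)%nat.

Lemma nega_word_interior (q : nat) (t : nat -> nat) (b n : nat) : (1 < q)%nat ->
  is_digit_seq q t -> ~ extremal_window q t b ->
  - INR q / (INR q + 1) + / INR q ^ 4 <= nega_word (INR q) t b (4 + n)
  <= 1 / (INR q + 1) - / INR q ^ 4.
Proof.
  intros Hq Ht Hw.
  assert (HQ : 2 <= INR q) by (apply (le_INR 2); lia).
  assert (Hup : (1 <= t b \/ t (S b) <= q - 2 \/ 1 <= t (S (S b)) \/ t (S (S (S b))) <= q - 2)%nat).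
  { pose proof (Ht (S b)); pose proof (Ht (S (S (S b)))); unfold extremal_window in Hw; lia. }
  assert (Hlo : (t b <= q - 2 \/ 1 <= t (S b) \/ t (S (S b)) <= q - 2 \/ 1 <= t (S (S (S b))))%nat).
  { pose proof (Ht b); pose proof (Ht (S (S b))); unfold extremal_window in Hw; lia. }
  clear Hw.
  destruct (nega_word_bounds q t (S (S (S (S b)))) n ltac:(lia) Ht) as [Flo Fhi].
  destruct (INR_digit_bounds q _ (Ht b)) as [a0 b0].
  destruct (INR_digit_bounds q _ (Ht (S b))) as [a1 b1].
  destruct (INR_digit_bounds q _ (Ht (S (S b)))) as [a2 b2].
  destruct (INR_digit_bounds q _ (Ht (S (S (S b))))) as [a3 b3].
  assert (Rup : 1 <= INR (t b) \/ INR (t (S b)) <= INR q - 2 \/ 1 <= INR (t (S (S b)))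
     \/ INR (t (S (S (S b)))) <= INR q - 2).
  { destruct Hup as [H|[H|[H|H]]]; [left|right;left|right;right;left|right;right;right];
    apply le_INR in H; rewrite ?minus_INR in H by lia; simpl in H; lra. }
  assert (Rlo : INR (t b) <= INR q - 2 \/ 1 <= INR (t (S b)) \/ INR (t (S (S b))) <= INR q - 2
     \/ 1 <= INR (t (S (S (S b))))).
  { destruct Hlo as [H|[H|[H|H]]]; [left|right;left|right;right;left|right;right;right];
    apply le_INR in H; rewrite ?minus_INR in H by lia; simpl in H; lra. }
  clear Hup Hlo.
  simpl nega_word.
  set (Q := INR q) in *. set (f := nega_word Q t (S (S (S (S b)))) n) in *.
  set (d0 := INR (t b)) in *. set (d1 := INR (t (S b))) in *.
  set (d2 := INR (t (S (S b)))) in *. set (d3 := INR (t (S (S (S b))))) in *.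
  set (U := 1 / (Q + 1)) in *.
  assert (HL : - Q / (Q + 1) = - Q * U) by (unfold U; field; lra).
  rewrite HL in *.
  assert (Q4 : 0 < Q ^ 4) by (apply pow_lt; lra).
  assert (Q3 : 1 <= Q ^ 3) by (apply pow_R1_Rle; lra).
  assert (Q2 : 1 <= Q ^ 2) by (apply pow_R1_Rle; lra).
  assert (E : Q ^ 4 * (- (d0 + - (d1 + - (d2 + - (d3 + f) / Q) / Q) / Q) / Q)
              = - d0 * Q ^ 3 + d1 * Q ^ 2 - d2 * Q + d3 + f) by (field; lra).
  assert (EU : Q ^ 4 * (U - / Q ^ 4) = (Q - 1) * Q ^ 2 + (Q - 1) + U - 1)
    by (unfold U; field; lra).
  assert (EL : Q ^ 4 * (- Q * U + / Q ^ 4) = - (Q - 1) * Q ^ 3 - (Q - 1) * Q - Q * U + 1)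
    by (unfold U; field; lra).
  split; apply Rmult_le_reg_l with (Q ^ 4); auto.
  - rewrite EL, E. destruct Rlo as [G|[G|[G|G]]]; nra.
  - rewrite EU, E. destruct Rup as [G|[G|[G|G]]]; nra.
Qed.

Lemma nega_word_common_prefix (Q : R) (s t : nat -> nat) (N m n : nat) : Q <> 0 ->
  (forall j, (j < N)%nat -> s j = t j) ->
  nega_word Q s 0 (N + m) - nega_word Q t 0 (N + n)
  = (nega_word Q s N m - nega_word Q t N n) / (- Q) ^ N.
Proof.
  intros HQ Hst.
  rewrite !nega_word_add, !Nat.add_0_l by exact HQ.
  rewrite (nega_word_ext Q s t 0 N) by (intros; apply Hst; lia).
  field; apply pow_nonzero; lra.
Qed.

Lemma nega_word_common_prefix_dist (q : nat) (s t : nat -> nat) (N m n : nat) :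
  (0 < q)%nat -> is_digit_seq q s -> is_digit_seq q t ->
  (forall j, (j < N)%nat -> s j = t j) ->
  Rabs (nega_word (INR q) s 0 (N + m) - nega_word (INR q) t 0 (N + n)) <= / INR q ^ N.
Proof.
  intros Hq Hs Ht Hst.
  assert (HQ : 0 < INR q) by (apply lt_0_INR; lia).
  rewrite nega_word_common_prefix, Rabs_div_opp_pow by (auto; lra).
  unfold Rdiv; rewrite <- (Rmult_1_l (/ INR q ^ N)) at 2.
  apply Rmult_le_compat_r; [left; apply Rinv_0_lt_compat, pow_lt; exact HQ|].
  apply nega_word_dist_le_1; assumption.
Qed.

Lemma negaq_value_exists (q : nat) (s : nat -> nat) : (1 < q)%nat ->
  is_digit_seq q s -> exists x, negaq_value q s x.
Proof.
  intros Hq Hs.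
  assert (HQ : 1 < INR q) by (apply (lt_INR 1); lia).
  destruct (R_complete (sum_f_R0 (fun k => INR (s k) / (- INR q) ^ S k))) as [x Hx];
    [|exists x; exact Hx].
  intros eps He; destruct (inv_pow_small (INR q) eps HQ He) as [N HN].
  exists N; intros n m Hn Hm; unfold Rdist.
  rewrite !sum_nega_word by lra.
  replace (S n) with (N + (S n - N))%nat by lia.
  replace (S m) with (N + (S m - N))%nat by lia.
  eapply Rle_lt_trans; [apply nega_word_common_prefix_dist|]; auto; lia.
Qed.

Lemma negaq_value_unique (q : nat) (s : nat -> nat) (x y : R) :
  negaq_value q s x -> negaq_value q s y -> x = y.
Proof. apply UL_sequence. Qed.

Lemma negaq_value_common_prefix_dist (q : nat) (s t : nat -> nat) (N : nat) (x y : R) :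
  (0 < q)%nat -> is_digit_seq q s -> is_digit_seq q t ->
  (forall j, (j < N)%nat -> s j = t j) ->
  negaq_value q s x -> negaq_value q t y -> Rabs (x - y) <= / INR q ^ N.
Proof.
  intros Hq Hs Ht Hst Hx Hy.
  apply (Un_cv_le_eventually _ _ _ N
           (Un_cv_dist _ _ _ _ (negaq_value_cv q s x Hq Hx) (negaq_value_cv q t y Hq Hy))).
  intros n Hn; replace n with (N + (n - N))%nat by lia.
  apply nega_word_common_prefix_dist; assumption.
Qed.

(* The first differing digit contributes at least [/ q^(k+1)] to [x - y], while
   the no-extremal-window condition keeps the later digits from cancelling it. *)
Lemma negaq_value_first_difference (q : nat) (s t : nat -> nat) (k : nat) (x y : R) :
  (1 < q)%nat -> is_digit_seq q s -> is_digit_seq q t -> ~ extremal_window q t (S k) ->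
  (forall j, (j < k)%nat -> s j = t j) -> s k <> t k ->
  negaq_value q s x -> negaq_value q t y -> / INR q ^ (k + 5) <= Rabs (x - y).
Proof.
  intros Hq Hs Ht Hw Hst Hk Hx Hy.
  assert (HQ : 2 <= INR q) by (apply (le_INR 2); lia).
  apply (Un_cv_ge_eventually _ _ _ (k + 5)
           (Un_cv_dist _ _ _ _ (negaq_value_cv q s x ltac:(lia) Hx)
              (negaq_value_cv q t y ltac:(lia) Hy))).
  intros n Hn; replace n with (k + S (4 + (n - k - 5)))%nat by lia.
  set (m := (n - k - 5)%nat).
  rewrite nega_word_common_prefix, Rabs_div_opp_pow by (auto; lra).
  destruct (nega_word_bounds q s (S k) (4 + m) ltac:(lia) Hs) as [Flo Fhi].
  destruct (nega_word_interior q t (S k) m Hq Ht Hw) as [Glo Ghi].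
  set (Q := INR q) in *.
  set (fs := nega_word Q s (S k) (4 + m)) in *. set (ft := nega_word Q t (S k) (4 + m)) in *.
  change (nega_word Q s k (S (4 + m))) with (- (INR (s k) + fs) / Q).
  change (nega_word Q t k (S (4 + m))) with (- (INR (t k) + ft) / Q).
  assert (Hgap : / Q ^ 4 <= Rabs (INR (s k) - INR (t k) + fs - ft)).
  { assert (1 / (Q + 1) - - Q / (Q + 1) = 1) by (field; lra).
    assert (0 < / Q ^ 4) by (apply Rinv_0_lt_compat, pow_lt; lra).
    destruct (proj1 (Nat.lt_gt_cases (s k) (t k)) Hk) as [Hl|Hl];
      apply le_INR in Hl; rewrite S_INR in Hl.
    - rewrite Rabs_left1 by lra; lra.
    - rewrite Rabs_right by lra; lra. }
  assert (0 < Q ^ k) by (apply pow_lt; lra).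
  replace (- (INR (s k) + fs) / Q - - (INR (t k) + ft) / Q)
    with ((INR (s k) - INR (t k) + fs - ft) / (- Q) ^ 1) by (simpl; field; lra).
  rewrite Rabs_div_opp_pow by lra.
  replace (/ Q ^ (k + 5)) with (/ Q ^ 4 / Q ^ 1 / Q ^ k)
    by (replace (k + 5)%nat with (4 + 1 + k)%nat by lia; rewrite !pow_add; field; lra).
  unfold Rdiv; apply Rmult_le_compat_r; [left; apply Rinv_0_lt_compat; lra|].
  apply Rmult_le_compat_r; [left; apply Rinv_0_lt_compat; simpl; lra|exact Hgap].
Qed.

Lemma negaq_value_close_prefix_eq (q : nat) (s t : nat -> nat) (m : nat) (x y : R) :
  (1 < q)%nat -> is_digit_seq q s -> is_digit_seq q t ->
  (forall b, ~ extremal_window q t b) ->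
  negaq_value q s x -> negaq_value q t y -> Rabs (x - y) < / INR q ^ (m + 5) ->
  forall k, (k <= m)%nat -> s k = t k.
Proof.
  intros Hq Hs Ht Hw Hx Hy Hxy k.
  assert (HQ : 1 <= INR q) by (apply (le_INR 1); lia).
  induction k as [k IH] using Wf_nat.lt_wf_ind; intros Hk.
  destruct (Nat.eq_dec (s k) (t k)) as [|Hne]; [assumption|exfalso].
  assert (Hsep := negaq_value_first_difference q s t k x y Hq Hs Ht (Hw (S k))
                    (fun j Hj => IH j Hj ltac:(lia)) Hne Hx Hy).
  assert (/ INR q ^ (m + 5) <= / INR q ^ (k + 5)).
  { apply Rinv_le_contravar; [apply pow_lt; lra | apply Rle_pow; [lra | lia]]. }
  lra.
Qed.

Lemma negaq_value_digits_unique (q : nat) (s t : nat -> nat) (x : R) :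
  (1 < q)%nat -> is_digit_seq q s -> is_digit_seq q t ->
  (forall b, ~ extremal_window q t b) ->
  negaq_value q s x -> negaq_value q t x -> forall k, s k = t k.
Proof.
  intros Hq Hs Ht Hw Hx Hy k.
  apply (negaq_value_close_prefix_eq q s t k x x); auto.
  rewrite Rminus_diag, Rabs_R0; apply Rinv_0_lt_compat, pow_lt, (lt_INR 0); lia.
Qed.

Lemma psum_le_mul (alpha : nat -> nat) (c n : nat) :
  (forall i, (alpha i <= c)%nat) -> (psum alpha n <= c * n)%nat.
Proof. intros Hc; induction n as [|n IH]; simpl; [lia|]. specialize (Hc n); nia. Qed.

Lemma block_digits_cases (u : nat) (alpha : nat -> nat) (k : nat) :
  block_digits u alpha k = u \/
  exists n, psum alpha (S n) = S k /\ block_digits u alpha k = alpha n.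
Proof.
  unfold block_digits.
  destruct (find _ _) as [n|] eqn:E; [right|left; reflexivity].
  apply find_some in E as [_ E]; apply Nat.eqb_eq in E; exists n; auto.
Qed.

Section PositiveBlocks.

Variable u : nat.
Variable alpha : nat -> nat.
Hypothesis alpha_pos : forall n, (1 <= alpha n)%nat.

Lemma psum_lt_mono (m n : nat) : (m < n)%nat -> (psum alpha m < psum alpha n)%nat.
Proof.
  induction n as [|n IH]; intros Hmn; simpl; [lia|].
  specialize (alpha_pos n); destruct (Nat.eq_dec m n); [subst; lia|].
  specialize (IH ltac:(lia)); lia.
Qed.

Lemma psum_le_mono (m n : nat) : (m <= n)%nat -> (psum alpha m <= psum alpha n)%nat.
Proof.
  intros Hmn; destruct (Nat.eq_dec m n); [subst; lia|].
  apply Nat.lt_le_incl, psum_lt_mono; lia.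
Qed.

Lemma le_psum (n : nat) : (n <= psum alpha n)%nat.
Proof. induction n as [|n IH]; simpl; [lia|]. specialize (alpha_pos n); lia. Qed.

Lemma block_digits_block_end (n k : nat) :
  psum alpha (S n) = S k -> block_digits u alpha k = alpha n.
Proof.
  intros Hend. unfold block_digits.
  destruct (find _ _) as [n'|] eqn:E.
  - apply find_some in E as [_ E]; apply Nat.eqb_eq in E.
    destruct (Nat.lt_total n' n) as [Hl|[Hl|Hl]]; [| congruence |];
      [pose proof (psum_lt_mono (S n') (S n)) | pose proof (psum_lt_mono (S n) (S n'))]; lia.
  - exfalso. pose proof (find_none _ _ E n) as F. rewrite in_seq in F.
    pose proof (le_psum (S n)).
    specialize (F ltac:(lia)); apply Nat.eqb_neq in F; lia.
Qed.

Lemma block_digits_inside_block (n k : nat) :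
  (psum alpha n <= k)%nat -> (S k < psum alpha (S n))%nat -> block_digits u alpha k = u.
Proof.
  intros Hlo Hhi.
  destruct (block_digits_cases u alpha k) as [|[n' [Hend _]]]; [assumption|exfalso].
  destruct (Nat.lt_total n' n) as [Hl|[Hl|Hl]];
    [pose proof (psum_le_mono (S n') n) | subst | pose proof (psum_le_mono (S n) (S n'))]; lia.
Qed.

Lemma block_digits_before_block_end (j k : nat) :
  block_digits u alpha k <> u -> (j < k)%nat -> (k < j + block_digits u alpha k)%nat ->
  block_digits u alpha j = u.
Proof.
  intros Hk Hjk Hlen.
  destruct (block_digits_cases u alpha k) as [|[n [Hend Hd]]]; [contradiction|].
  rewrite Hd in Hlen; simpl in Hend.
  apply (block_digits_inside_block n); simpl; lia.
Qed.

End PositiveBlocks.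

Section ThetaBlocks.

Variables q u : nat.

Lemma in_Theta_pos (alpha : nat -> nat) : in_Theta q u alpha -> forall n, (1 <= alpha n)%nat.
Proof. intros hA n; apply (hA n). Qed.

Lemma in_Theta_is_digit_seq (alpha : nat -> nat) : in_Theta q u alpha -> is_digit_seq q alpha.
Proof. intros hA k; destruct (hA k) as [H1 [H2 _]]; lia. Qed.

Lemma in_Theta_no_extremal_window (alpha : nat -> nat) :
  in_Theta q u alpha -> forall b, ~ extremal_window q alpha b.
Proof.
  intros hA b; pose proof (hA b) as [H0 _]; pose proof (hA (S b)) as [H1 _].
  unfold extremal_window; lia.
Qed.

Lemma block_digits_is_digit_seq (alpha : nat -> nat) : (u < q)%nat ->
  in_Theta q u alpha -> is_digit_seq q (block_digits u alpha).
Proof.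
  intros hu hA k.
  destruct (block_digits_cases u alpha k) as [->|[n [_ ->]]]; [assumption|].
  destruct (hA n) as [_ [Hn _]]; lia.
Qed.

(* For [u = 0] a digit [q-1] ends a block of length [q-1 >= 3], so the two digits
   before it are [0]; for [u <> 0] no digit is [0]. *)
Lemma block_digits_no_extremal_window (alpha : nat -> nat) : (3 < q)%nat ->
  in_Theta q u alpha -> forall b, ~ extremal_window q (block_digits u alpha) b.
Proof.
  intros hq hA b Hw.
  assert (Hu0 : forall k, block_digits u alpha k = 0%nat -> u = 0%nat).
  { intros k Hk; destruct (block_digits_cases u alpha k) as [|[n [_ Hn]]];
      [lia|destruct (hA n); lia]. }
  assert (Hend : forall j k, block_digits u alpha k = (q - 1)%nat -> (j < k)%nat ->
                   (k < j + (q - 1))%nat -> u = 0%nat -> block_digits u alpha j = 0%nat).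
  { intros j k Hk Hjk Hlen Hu; rewrite <- Hu.
    apply (block_digits_before_block_end u alpha (in_Theta_pos _ hA) j k); lia. }
  destruct Hw as [[H0 [H1 [H2 H3]]]|[H0 [H1 [H2 H3]]]].
  - pose proof (Hend (S b) (S (S (S b))) H3 ltac:(lia) ltac:(lia) (Hu0 b H0)); lia.
  - pose proof (Hend b (S (S b)) H2 ltac:(lia) ltac:(lia) (Hu0 (S b) H1)); lia.
Qed.

Lemma block_digits_block_eq (alpha beta : nat -> nat) (m n : nat) :
  in_Theta q u alpha -> in_Theta q u beta ->
  (forall k, (k < m)%nat -> block_digits u alpha k = block_digits u beta k) ->
  psum alpha n = psum beta n -> (psum alpha (S n) <= m)%nat -> alpha n = beta n.
Proof.
  intros hA hB Hm Hstart Hn; simpl in Hn.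
  destruct (hA n) as [A1 [_ A3]], (hB n) as [B1 [_ B3]].
  destruct (Nat.lt_total (alpha n) (beta n)) as [Hl|[Hl|Hl]]; [exfalso| assumption |exfalso].
  - set (k := (psum alpha n + alpha n - 1)%nat).
    assert (Ea : block_digits u alpha k = alpha n)
      by (apply (block_digits_block_end u alpha (in_Theta_pos _ hA)); simpl; lia).
    assert (Eb : block_digits u beta k = u)
      by (apply (block_digits_inside_block u beta (in_Theta_pos _ hB) n); simpl; lia).
    rewrite Hm in Ea by lia; congruence.
  - set (k := (psum beta n + beta n - 1)%nat).
    assert (Eb : block_digits u beta k = beta n)
      by (apply (block_digits_block_end u beta (in_Theta_pos _ hB)); simpl; lia).
    assert (Ea : block_digits u alpha k = u)
      by (apply (block_digits_inside_block u alpha (in_Theta_pos _ hA) n); simpl; lia).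
    rewrite Hm in Ea by lia; congruence.
Qed.

Lemma block_digits_prefix_inj (alpha beta : nat -> nat) (m : nat) :
  in_Theta q u alpha -> in_Theta q u beta ->
  (forall k, (k < m)%nat -> block_digits u alpha k = block_digits u beta k) ->
  forall n, (psum alpha (S n) <= m)%nat -> alpha n = beta n.
Proof.
  intros hA hB Hm.
  assert (H : forall n, (psum alpha (S n) <= m)%nat ->
                alpha n = beta n /\ psum alpha (S n) = psum beta (S n)).
  { induction n as [|n IH]; intros Hn.
    - assert (alpha 0%nat = beta 0%nat) by (apply (block_digits_block_eq _ _ m); auto).
      simpl; lia.
    - pose proof (psum_le_mono alpha (in_Theta_pos _ hA) (S n) (S (S n)) ltac:(lia)).
      destruct (IH ltac:(lia)) as [_ Hstart].
      assert (alpha (S n) = beta (S n)) by (apply (block_digits_block_eq _ _ m); auto).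
      split; [assumption|]; simpl in *; lia. }
  intros n Hn; apply H, Hn.
Qed.

End ThetaBlocks.

Section BlockMap.

Variables q u : nat.
Hypothesis hq : (3 < q)%nat.
Hypothesis hu : (u < q)%nat.

Lemma block_digits_value_inj (alpha beta : nat -> nat) (x : R) :
  in_Theta q u alpha -> in_Theta q u beta ->
  negaq_value q (block_digits u alpha) x -> negaq_value q (block_digits u beta) x ->
  alpha = beta.
Proof.
  intros hA hB Hx Hy; apply functional_extensionality; intros n.
  apply (block_digits_prefix_inj q u alpha beta (psum alpha (S n)) hA hB); [|lia].
  intros k _; apply (negaq_value_digits_unique q _ _ x); auto; try lia.
  - apply block_digits_is_digit_seq; assumption.
  - apply block_digits_is_digit_seq; assumption.
  - apply block_digits_no_extremal_window; assumption.
Qed.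

Lemma h_block_value (alpha : nat -> nat) (x : R) :
  in_Theta q u alpha -> negaq_value q (block_digits u alpha) x ->
  negaq_value q alpha (h q u x).
Proof.
  intros hA Hx; unfold h.
  destruct (negaq_value_exists q alpha ltac:(lia) (in_Theta_is_digit_seq q u alpha hA))
    as [y Hy].
  match goal with |- negaq_value q alpha (epsilon ?i ?P) =>
    destruct (epsilon_spec i P) as [beta [hB [Hx' Hy']]] end.
  - exists y, alpha; auto.
  - rewrite <- (block_digits_value_inj beta alpha x hB hA Hx' Hx); exact Hy'.
Qed.

Lemma Dh_digits_unique (x : R) (s t : nat -> nat) : Dh q u x ->
  is_digit_seq q s -> is_digit_seq q t -> negaq_value q s x -> negaq_value q t x ->
  forall k, s k = t k.
Proof.
  intros [alpha [hA Hx]] Hs Ht Hsx Htx k.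
  pose proof (block_digits_is_digit_seq q u alpha hu hA) as Hd.
  pose proof (block_digits_no_extremal_window q u alpha hq hA) as Hw.
  rewrite (negaq_value_digits_unique q _ _ x ltac:(lia) Hs Hd Hw Hsx Hx k).
  symmetry; exact (negaq_value_digits_unique q _ _ x ltac:(lia) Ht Hd Hw Htx Hx k).
Qed.

Lemma h_inj (x1 x2 : R) : Dh q u x1 -> Dh q u x2 -> h q u x1 = h q u x2 -> x1 = x2.
Proof.
  intros [a1 [hA1 Hx1]] [a2 [hA2 Hx2]] Hh.
  pose proof (h_block_value a1 x1 hA1 Hx1) as Hy1; rewrite Hh in Hy1.
  pose proof (h_block_value a2 x2 hA2 Hx2) as Hy2.
  assert (a1 = a2).
  { apply functional_extensionality.
    apply (negaq_value_digits_unique q a1 a2 (h q u x2)); auto; try lia;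
      [apply (in_Theta_is_digit_seq q u) | apply (in_Theta_is_digit_seq q u)
      | apply (in_Theta_no_extremal_window q u)]; assumption. }
  subst a2; exact (negaq_value_unique q _ _ _ Hx1 Hx2).
Qed.

Lemma h_surj (y : R) : Eh q u y -> exists x, Dh q u x /\ h q u x = y.
Proof.
  intros [alpha [hA Hy]].
  destruct (negaq_value_exists q (block_digits u alpha) ltac:(lia)
              (block_digits_is_digit_seq q u alpha hu hA)) as [x Hx].
  exists x; split; [exists alpha; split; assumption|].
  exact (negaq_value_unique q alpha _ _ (h_block_value alpha x hA Hx) Hy).
Qed.

(* Points of [D(h)] closer than [/ q^(m+5)] share their first [m+1] digits,
   hence the first [m / (q-1)] blocks, since each block has length at most [q-1]. *)
Lemma h_continuous (x0 : R) : Dh q u x0 -> limit1_in (h q u) (Dh q u) (h q u x0) x0.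
Proof.
  intros [alpha0 [hA0 Hx0]] eps Heps.
  destruct (inv_pow_small (INR q) eps ltac:(apply (lt_INR 1); lia) Heps) as [N HN].
  set (m := ((q - 1) * N)%nat).
  exists (/ INR q ^ (m + 5)); split;
    [apply Rinv_0_lt_compat, pow_lt, (lt_INR 0); lia|].
  intros x [[alpha [hA Hx]] Hd]; simpl in Hd |- *; unfold Rdist in *.
  assert (Hdig : forall k, (k <= m)%nat -> block_digits u alpha k = block_digits u alpha0 k).
  { apply (negaq_value_close_prefix_eq q _ _ m x x0); try assumption; try lia;
      apply block_digits_is_digit_seq || apply block_digits_no_extremal_window; assumption. }
  assert (Hpre : forall n, (n < N)%nat -> alpha n = alpha0 n).
  { intros n Hn; apply (block_digits_prefix_inj q u alpha alpha0 m hA hA0);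
      [intros k Hk; apply Hdig; lia|].
    assert (psum alpha (S n) <= (q - 1) * S n)%nat
      by (apply psum_le_mul; intros i; apply (hA i)).
    unfold m; nia. }
  eapply Rle_lt_trans; [|exact HN].
  apply (negaq_value_common_prefix_dist q alpha alpha0 N); [lia | | | exact Hpre | |].
  - apply (in_Theta_is_digit_seq q u); assumption.
  - apply (in_Theta_is_digit_seq q u); assumption.
  - apply h_block_value; assumption.
  - apply h_block_value; assumption.
Qed.

End BlockMap.

Theorem theorem3p1 (q u : nat) (hq : (3 < q)%nat) (hu : (u < q)%nat) :
  (forall alpha beta x,
      in_Theta q u alpha -> in_Theta q u beta ->
      negaq_value q (block_digits u alpha) x ->
      negaq_value q (block_digits u beta) x ->
      forall n, alpha n = beta n) /\
  (forall x, Dh q u x ->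
      forall g1 g2, is_digit_seq q g1 -> is_digit_seq q g2 ->
      negaq_value q g1 x -> negaq_value q g2 x ->
      forall k, g1 k = g2 k) /\
  (forall alpha x, in_Theta q u alpha ->
      negaq_value q (block_digits u alpha) x -> negaq_value q alpha (h q u x)) /\
  (forall x, Dh q u x -> Eh q u (h q u x)) /\
  (forall x1 x2, Dh q u x1 -> Dh q u x2 -> h q u x1 = h q u x2 -> x1 = x2) /\
  (forall y, Eh q u y -> exists x, Dh q u x /\ h q u x = y) /\
  (forall x0, Dh q u x0 -> limit1_in (h q u) (Dh q u) (h q u x0) x0).
Proof.
  repeat split.
  - intros alpha beta x hA hB Hx Hy n.
    rewrite (block_digits_value_inj q u hq hu alpha beta x hA hB Hx Hy); reflexivity.
  - intros x Hx g1 g2; exact (Dh_digits_unique q u hq hu x g1 g2 Hx).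
  - apply h_block_value; assumption.
  - intros x [alpha [hA Hx]]; exists alpha; split; [assumption|].
    apply h_block_value; assumption.
  - apply h_inj; assumption.
  - apply h_surj; assumption.
  - apply h_continuous; assumption.
Qed.
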